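(* Let $n\ge 1$, let $x_0,\dots,x_n$ be pairwise distinct points of $[-1,1]$, let $\omega\in\mathbb{R}\setminus\{0\}$ and let $f_0,\dots,f_n\in\mathbb{C}$. Then the $(n+1)\times(n+1)$ matrix $T(B+i\omega E)$ is nonsingular. Consequently the collocation system $T(B+i\omega E)c=f$, equivalently $$\sum_{k=0}^n c_k T_k'(x_j)+i\omega\sum_{k=0}^n c_kT_k(x_j)=f_j,\qquad j=0,\dots,n,$$ has a unique solution $c=(c_0,\dots,c_n)^{\mathsf T}\in\mathbb{C}^{n+1}$; that is, there is exactly one polynomial $p(x)=\sum_{k=0}^n c_kT_k(x)$ of degree at most $n$ with $p'(x_j)+i\omega p(x_j)=f_j$ for all $j$.
   Context: $T_k$ denotes the Chebyshev polynomial of the first kind of degree $k$. $T$ is the $(n+1)\times(n+1)$ matrix with rows indexed by nodes and columns by degree: $T_{jk}=T_k(x_j)$, $j,k=0,\dots,n$. $B$ is the Chebyshev spectral differentiation matrix: $B_{ik}=2k/r_i$ if $k>i$ and $i+k$ is odd, and $B_{ik}=0$ otherwise ($0\le i,k\le n$), where $r_0=2$ and $r_i=1$ for $i\ge1$; it satisfies $\frac{d}{dx}\sum_k c_kT_k=\sum_i (Bc)_iT_i$. $E$ is the identity matrix. *)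

From HB Require Import structures.
From mathcomp Require Import all_boot all_order all_algebra.
From mathcomp Require Import complex.
From mathcomp Require Import reals.
Set Implicit Arguments. Unset Strict Implicit. Unset Printing Implicit Defensive.
Import Order.TTheory GRing.Theory Num.Theory.
Local Open Scope ring_scope.
Local Open Scope complex_scope.

Fixpoint cheb_pair (R : nzRingType) (k : nat) : {poly R} * {poly R} :=
  match k with
  | 0%N => (1, 'X)
  | k'.+1 => let: (p, q) := cheb_pair R k' in (q, 2%:R *: 'X * q - p)
  end.
Definition chebT (R : nzRingType) (k : nat) : {poly R} := (cheb_pair R k).1.

Definition chebTmx (R : rcfType) (n : nat) (x : 'I_n.+1 -> R) : 'M[R[i]]_n.+1 :=
  \matrix_(j < n.+1, k < n.+1) ((chebT R k).[x j])%:C.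

Definition cheb_r (R : nzRingType) (i : nat) : R := if i == 0%N then 2%:R else 1.

(* Chebyshev spectral differentiation matrix:
   B_{ik} = 2k / r_i if k > i and i + k odd, 0 otherwise. *)
Definition chebBmx (R : rcfType) (n : nat) : 'M[R[i]]_n.+1 :=
  \matrix_(i < n.+1, k < n.+1)
    (if (i < k)%N && odd (i + k) then ((2 * k)%:R / cheb_r R i)%:C else 0).

From HB Require Import structures.
From mathcomp Require Import all_boot all_order all_algebra.
From mathcomp Require Import complex.
From mathcomp Require Import reals.
Set Implicit Arguments. Unset Strict Implicit. Unset Printing Implicit Defensive.
Import Order.TTheory GRing.Theory Num.Theory.
Local Open Scope ring_scope.
Local Open Scope complex_scope.

(* Identify a coefficient vector c with its Chebyshev series
   p_c = sum_k c_k T_k, a polynomial of size at most n+1.  Since T_k has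
   degree exactly k, c |-> p_c is injective.
   - T is nonsingular: T c is the vector of values p_c(x_j) at n+1 distinct
     nodes, so T c = 0 forces p_c = 0, hence c = 0.
   - B + i w E is nonsingular: B is strictly upper triangular, so this matrix
     is upper triangular with diagonal i w != 0.
   Hence T (B + i w E) is nonsingular and M c = f has a unique solution.
   - For the pointwise collocation system, the matrix N_{jk} =
     T_k'(x_j) + i w T_k(x_j) maps c to the values of p_c' + i w p_c at the
     nodes; if they all vanish then p_c' + i w p_c = 0 (size <= n+1, n+1 roots),
     and comparing sizes (deg p' < deg p) gives p_c = 0, so N is nonsingular. *)

Lemma graded_family_indep (F : idomainType) (P : nat -> {poly F})
    (m : nat) (a : nat -> F) :
  (forall k, size (P k) = k.+1) ->
  \sum_(k < m) a k *: P k = 0 -> forall k, (k < m)%N -> a k = 0.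
Proof.
move=> sizeP; elim: m => [//|m IH]; rewrite big_ord_recr /= => sum0 k.
have am0 : a m = 0.
  have := congr1 (fun p : {poly F} => p`_m) sum0.
  rewrite coefD coefZ coef_sum coef0 big1 ?add0r; last first.
    by move=> i _; rewrite coefZ nth_default ?mulr0 // sizeP.
  have leadP : (P m)`_m != 0.
    by rewrite -[m in _`_m]/(m.+1.-1) -(sizeP m) -/(lead_coef _) lead_coef_eq0
               -size_poly_eq0 sizeP.
  by move/eqP; rewrite mulf_eq0 (negPf leadP) orbF => /eqP.
rewrite ltnS leq_eqVlt => /orP[/eqP -> //|]; apply: IH.
by rewrite am0 scale0r addr0 in sum0.
Qed.

(* The only solution of p' + a p = 0 with a != 0 is p = 0: otherwise the
   two terms would have different sizes. *)
Lemma deriv_addZ_eq0 (F : idomainType) (p : {poly F}) (a : F) :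
  a != 0 -> p^`() + a *: p = 0 -> p = 0.
Proof.
move=> a0 eq0; apply/eqP; apply: contraT => p0.
have sizes : size p^`() = size p.
  by rewrite -(size_scale p a0) -(addr0_eq eq0) size_polyN.
by have := lt_size_deriv p0; rewrite sizes ltnn.
Qed.

Lemma poly_eq0_at_nodes (F : idomainType) (n : nat) (y : 'I_n.+1 -> F)
    (p : {poly F}) :
  injective y -> (size p <= n.+1)%N -> (forall j, p.[y j] = 0) -> p = 0.
Proof.
move=> y_inj sp vanish.
apply: (@roots_geq_poly_eq0 _ p [seq y j | j <- enum 'I_n.+1]).
- by apply/allP => z /mapP [j _ ->]; apply/rootP.
- by rewrite map_inj_uniq ?enum_uniq.
- by rewrite size_map size_enum_ord.
Qed.

Lemma unitmx_of_ker0 (F : fieldType) (n : nat) (A : 'M[F]_n) :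
  (forall c : 'cV_n, A *m c = 0 -> c = 0) -> A \in unitmx.
Proof.
move=> ker0; rewrite -unitmx_tr -row_free_unit; apply: inj_row_free => v vA0.
apply: trmx_inj; rewrite trmx0; apply: ker0.
by rewrite -[A]trmxK -trmx_mul vA0 trmx0.
Qed.

Lemma unitmx_unique_solution (F : fieldType) (n : nat) (A : 'M[F]_n)
    (f : 'cV_n) :
  A \in unitmx -> exists! c : 'cV_n, A *m c = f.
Proof.
move=> A_unit; exists (invmx A *m f); split; first by rewrite mulKVmx.
by move=> c <-; rewrite mulKmx.
Qed.

Lemma strict_upper_shift_unitmx (F : fieldType) (n : nat) (A : 'M[F]_n)
    (a : F) :
  (forall i j : 'I_n, (j <= i)%N -> A i j = 0) -> a != 0 ->
  A + a *: 1%:M \in unitmx.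
Proof.
move=> upper a0; rewrite -unitmx_tr unitmxE det_trig.
  rewrite unitfE prodf_seq_neq0; apply/allP => i _ /=.
  by rewrite !mxE upper // add0r eqxx mulr1.
apply/is_trig_mxP => i j lt_ij; rewrite !mxE upper ?(ltnW lt_ij) // add0r.
by rewrite -val_eqE /= gtn_eqF ?mulr0.
Qed.

(* deg T_k = k; over a numeric domain the leading coefficient 2^(k-1) is
   nonzero.  The pair (T_k, T_{k+1}) is tracked as in the definition. *)
Lemma size_cheb_pair (R : numDomainType) (k : nat) :
  size (cheb_pair R k).1 = k.+1 /\ size (cheb_pair R k).2 = k.+2.
Proof.
elim: k => [|k [IH1 IH2]] /=; first by rewrite size_poly1 size_polyX.
case E: (cheb_pair R k) => [p q] /=; rewrite E /= in IH1 IH2; split => //.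
have size2Xq : size (2%:R *: 'X * q) = k.+3.
  rewrite -scalerAl size_scale ?pnatr_eq0 // mulrC size_mulX ?IH2 //.
  by rewrite -size_poly_eq0 IH2.
by rewrite size_polyDl size2Xq // size_polyN IH1 ltnS ltnW.
Qed.

Lemma size_chebT (R : numDomainType) (k : nat) : size (chebT R k) = k.+1.
Proof. exact: (size_cheb_pair R k).1. Qed.

Section ChebyshevSeries.
Variables (R : rcfType) (n : nat).

Definition chebTc (k : nat) : {poly R[i]} :=
  map_poly (real_complex R) (chebT R k).

Lemma size_chebTc (k : nat) : size (chebTc k) = k.+1.
Proof. by rewrite size_map_inj_poly ?size_chebT //; exact: complexI. Qed.

Definition cheb_series (c : 'cV[R[i]]_n.+1) : {poly R[i]} :=
  \sum_(k < n.+1) c k 0 *: chebTc k.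

Lemma size_cheb_series (c : 'cV[R[i]]_n.+1) : (size (cheb_series c) <= n.+1)%N.
Proof.
apply: (big_ind (fun q : {poly R[i]} => size q <= n.+1)%N).
- by rewrite size_poly0.
- by move=> p q sp sq; rewrite (leq_trans (size_polyD _ _)) // geq_max sp sq.
- by move=> k _; rewrite (leq_trans (size_scale_leq _ _)) // size_chebTc.
Qed.

Lemma cheb_series_eq0 (c : 'cV[R[i]]_n.+1) : cheb_series c = 0 -> c = 0.
Proof.
move=> p0; apply/matrixP => k j; rewrite (ord1 j) mxE -(inord_val k).
apply: (graded_family_indep (a := fun k => c (inord k) 0) size_chebTc _ (ltn_ord k)).
by rewrite -[RHS]p0; apply: eq_bigr => i _; rewrite inord_val.
Qed.

Lemma horner_cheb_series (c : 'cV[R[i]]_n.+1) (r : R) :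
  (cheb_series c).[r%:C] = \sum_(k < n.+1) c k 0 * ((chebT R k).[r])%:C.
Proof.
rewrite horner_sum; apply: eq_bigr => k _.
by rewrite hornerZ /chebTc horner_map.
Qed.

Lemma horner_deriv_cheb_series (c : 'cV[R[i]]_n.+1) (r : R) :
  (cheb_series c)^`().[r%:C] = \sum_(k < n.+1) c k 0 * ((chebT R k)^`().[r])%:C.
Proof.
rewrite linear_sum horner_sum; apply: eq_bigr => k _.
by rewrite linearZ hornerZ -horner_map -(deriv_map (real_complex R)).
Qed.

Variable x : 'I_n.+1 -> R.
Hypothesis x_inj : injective x.

Lemma vanish_at_nodes (p : {poly R[i]}) :
  (size p <= n.+1)%N -> (forall j, p.[(x j)%:C] = 0) -> p = 0.
Proof.
apply: poly_eq0_at_nodes => i j /complexI; exact: x_inj.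
Qed.

Lemma chebTmx_mul (c : 'cV[R[i]]_n.+1) (j : 'I_n.+1) :
  (chebTmx x *m c) j 0 = (cheb_series c).[(x j)%:C].
Proof.
by rewrite horner_cheb_series mxE; apply: eq_bigr => k _; rewrite mxE mulrC.
Qed.

Lemma chebTmx_unit : chebTmx x \in unitmx.
Proof.
apply: unitmx_of_ker0 => c Tc0; apply/cheb_series_eq0/vanish_at_nodes.
  exact: size_cheb_series.
by move=> j; rewrite -chebTmx_mul Tc0 mxE.
Qed.

Definition collocmx (a : R[i]) : 'M[R[i]]_n.+1 :=
  \matrix_(j < n.+1, k < n.+1)
    (((chebT R k)^`().[x j])%:C + a * ((chebT R k).[x j])%:C).

Lemma collocmx_mul (a : R[i]) (c : 'cV[R[i]]_n.+1) (j : 'I_n.+1) :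
  (collocmx a *m c) j 0 =
    \sum_(k < n.+1) c k 0 * ((chebT R k)^`().[x j])%:C
    + a * \sum_(k < n.+1) c k 0 * ((chebT R k).[x j])%:C.
Proof.
rewrite mxE mulr_sumr -big_split; apply: eq_bigr => k _.
by rewrite mxE mulrDl !(mulrC _ (c k 0)) mulrCA.
Qed.

Lemma collocmx_unit (a : R[i]) : a != 0 -> collocmx a \in unitmx.
Proof.
move=> a0; apply: unitmx_of_ker0 => c Nc0; apply/cheb_series_eq0.
apply: (deriv_addZ_eq0 a0); apply: vanish_at_nodes.
  rewrite (leq_trans (size_polyD _ _)) // geq_max.
  rewrite (leq_trans (size_scale_leq _ _)) ?size_cheb_series // andbT.
  by rewrite (leq_trans (size_poly _ _)) // (leq_trans (leq_pred _))
             ?size_cheb_series.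
move=> j; rewrite hornerD hornerZ horner_cheb_series horner_deriv_cheb_series.
by rewrite -collocmx_mul Nc0 mxE.
Qed.

End ChebyshevSeries.

Lemma chebBmx_strict_upper (R : rcfType) (n : nat) (i k : 'I_n.+1) :
  (k <= i)%N -> chebBmx R n i k = 0.
Proof. by move=> le_ki; rewrite mxE ltnNge le_ki. Qed.

Theorem mainTheorem1 (R : realType) (n : nat) (x : 'I_n.+1 -> R)
    (omega : R) (f : 'cV[R[i]]_n.+1) :
  (1 <= n)%N ->
  injective x ->
  (forall j, -1 <= x j <= 1) ->
  omega != 0 ->
  let M := chebTmx x *m (chebBmx R n + ('i * omega%:C) *: 1%:M) in
  [/\ M \in unitmx,
      exists! c : 'cV[R[i]]_n.+1, M *m c = f &
      exists! c : 'cV[R[i]]_n.+1,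
        forall j : 'I_n.+1,
          \sum_(k < n.+1) c k 0 * ((chebT R k)^`().[x j])%:C
          + 'i * omega%:C * \sum_(k < n.+1) c k 0 * ((chebT R k).[x j])%:C
          = f j 0].
Proof.
move=> _ x_inj _ omega0 M.
have a0 : 'i * omega%:C != 0 :> R[i].
  by rewrite mulf_neq0 ?neq0Ci // eq_complex /= eqxx andbT.
have M_unit : M \in unitmx.
  rewrite unitmx_mul chebTmx_unit //=.
  exact: strict_upper_shift_unitmx (@chebBmx_strict_upper R n) a0.
split => //; first exact: unitmx_unique_solution.
have [c [Nc uniq_c]] := unitmx_unique_solution f (collocmx_unit x_inj a0).
exists c; split => [j|c' Nc']; first by rewrite -collocmx_mul Nc.
by apply: uniq_c; apply/matrixP => j k; rewrite (ord1 k) collocmx_mul Nc'.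
Qed.
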